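(* Let $p$ be a prime, $q=p^r$, $\mathscr{C}\subseteq\mathbb{F}_q^n$ a linear code over $\mathbb{F}_q$ of dimension $k$ ($1\le k<n$), $\mathscr{D}\subseteq\mathbb{F}_{q^k}^m$ a linear code over $\mathbb{F}_{q^k}$ of dimension $s$ ($1\le s<m$) such that for each $1\le i\le m$ some codeword has $i$-th coordinate $1$, $\kappa:\mathbb{F}_{q^k}\to\mathcal{L}(\mathscr{C},\mathbb{F}_p)$ an $\mathbb{F}_p$-linear isomorphism, $f_\lambda=\kappa(\lambda)$, and $Q=\operatorname{span}\{\Phi_\Lambda:\Lambda\in\mathscr{D}\}$ the stabilizer code described in the context, with minimum distance $\delta$. If $d(\mathscr{C})\le d(\mathscr{D})$, then $\delta=d(\mathscr{C})$.
   Context: $\zeta=e^{2\pi i/p}$; $\operatorname{tr}:\mathbb{F}_q\to\mathbb{F}_p$ the trace. $\mathcal{L}(\mathscr{C},\mathbb{F}_p)$ is the space of $\mathbb{F}_p$-linear maps $\mathscr{C}\to\mathbb{F}_p$. $\phi_\lambda=q^{-k/2}\sum_{\mathbf{c}\in\mathscr{C}}\zeta^{f_\lambda(\mathbf{c})}|\mathbf{c}\rangle$, $\Phi_\Lambda=\phi_{\lambda_1}\otimes\cdots\otimes\phi_{\lambda_m}$ in $(\mathbb{C}^q)^{\otimes nm}$ (orthonormal basis $|\mathbf{x}\rangle$, $\mathbf{x}\in\mathbb{F}_q^{nm}$). $d(\mathscr{C})$, $d(\mathscr{D})$ are minimum Hamming distances. Errors: $X(a)|x\rangle=|x+a\rangle$,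 $Z(b)|x\rangle=\zeta^{\operatorname{tr}(bx)}|x\rangle$, tensored to $X(\mathbf{a}),Z(\mathbf{b})$; error group $\mathcal{P}_{nm}=\{\omega^cX(\mathbf{a})Z(\mathbf{b})\}$ with $\omega=\zeta,c\in\mathbb{F}_p$ ($p$ odd) or $\omega=i,c\in\{0,1,2,3\}$ ($p=2$); weight of $\omega^cX(\mathbf{a})Z(\mathbf{b})$ is $\#\{j:(a_j,b_j)\ne(0,0)\}$. With $\mathcal{S}=\{E\in\mathcal{P}_{nm}:Ev=v\ \forall v\in Q\}$, $Q$ is a stabilizer code (i.e. $Q$ is the common fixed space of $\mathcal{S}$), and its minimum distance is $\delta=\min\{\operatorname{wt}(E):E\in C_{\mathcal{P}_{nm}}(\mathcal{S})\setminus\mathcal{S}\mathcal{Z}(\mathcal{P}_{nm})\}$, where $\mathcal{Z}(\mathcal{P}_{nm})$ is the set of scalar elements. *)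

From HB Require Import structures.
From mathcomp Require Import all_boot all_order all_algebra all_field.
Import Order.TTheory GRing.Theory Num.Theory.
Local Open Scope ring_scope.

Definition hw {E : zmodType} {n : nat} (v : 'rV[E]_n) : nat :=
  #|[set i : 'I_n | v 0 i != 0]|.

Definition dmin {E : finFieldType} {n : nat} (C : {vspace 'rV[E]_n}) : nat :=
  \big[minn/n]_(c : 'rV[E]_n | (c \in C) && (c != 0)) hw c.

(* Absolute trace F_q -> F_p, q = p^r: the unique t in F_p whose image in F
   is sum_{i<r} x^(p^i). *)
Definition trF {F : finFieldType} (p r : nat) (x : F) : 'F_p :=
  odflt 0 [pick t : 'F_p | ((val t)%:R : F) == \sum_(i < r) x ^+ (p ^ i)].

(* zeta = e^{2 pi i / p} in the algebraic complex numbers: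
   p.-root (-1) is e^{i pi / p} (root of minimal nonnegative argument). *)
Definition zeta (p : nat) : algC := (p.-root (-1)) ^+ 2.
Definition omega (p : nat) : algC := if p == 2%N then 'i else zeta p.

(* phi_lambda evaluated at the basis vector |c>, with f = f_lambda. *)
Definition phi {F : finFieldType} (p : nat) {n : nat} (k : nat) (C : {vspace 'rV[F]_n})
    (f : 'rV[F]_n -> 'F_p) (c : 'rV[F]_n) : algC :=
  if c \in C then (sqrtC ((#|F| ^ k)%:R))^-1 * zeta p ^+ val (f c) else 0.

(* Phi_Lambda evaluated at |x>, x in F_q^{nm}, written as an m x n matrix
   whose j-th row is the j-th tensor block. *)
Definition Phi {F K : finFieldType} (p : nat) {n : nat} (k : nat) {m : nat} (C : {vspace 'rV[F]_n})
    (kappa : K -> 'rV[F]_n -> 'F_p) (L : 'rV[K]_m) (x : 'M[F]_(m, n)) : algC :=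
  \prod_(j < m) phi p k C (kappa (L 0 j)) (row j x).

Definition inQ {F K : finFieldType} (p : nat) {n : nat} (k : nat) {m : nat} (C : {vspace 'rV[F]_n})
    (D : {vspace 'rV[K]_m}) (kappa : K -> 'rV[F]_n -> 'F_p)
    (v : 'M[F]_(m, n) -> algC) : Prop :=
  exists a : 'rV[K]_m -> algC,
    forall x, v x = \sum_(L : 'rV[K]_m | L \in D) a L * Phi p k C kappa L x.

Definition trdot {F : finFieldType} (p r : nat) {m n : nat} (b x : 'M[F]_(m, n)) : 'F_p :=
  \sum_(j < m) \sum_(l < n) trF p r (b j l * x j l).

(* The Pauli operator omega^c X(a) Z(b) acting on a vector v
   (X(a) Z(b) |x> = zeta^{tr(b.x)} |x + a>). *)
Definition pauli {F : finFieldType} (p r : nat) {m n : nat} (c : nat) (a b : 'M[F]_(m, n))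
    (v : 'M[F]_(m, n) -> algC) : 'M[F]_(m, n) -> algC :=
  fun y => omega p ^+ c * zeta p ^+ val (trdot p r b (y - a)) * v (y - a).

Definition pwt {F : finFieldType} {m n : nat} (a b : 'M[F]_(m, n)) : nat :=
  #|[set ij : 'I_m * 'I_n | (a ij.1 ij.2 != 0) || (b ij.1 ij.2 != 0)]|.

Section Stab.
Variables (F K : finFieldType) (p r n k m : nat) (C : {vspace 'rV[F]_n})
  (D : {vspace 'rV[K]_m}) (kappa : K -> 'rV[F]_n -> 'F_p).

Definition inS (c : nat) (a b : 'M[F]_(m, n)) : Prop :=
  forall v, inQ p k C D kappa v -> forall y, pauli p r c a b v y = v y.

Definition inCent (c : nat) (a b : 'M[F]_(m, n)) : Prop :=
  forall c' a' b', inS c' a' b' ->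
    forall v y, pauli p r c a b (pauli p r c' a' b' v) y
              = pauli p r c' a' b' (pauli p r c a b v) y.

(* omega^c X(a) Z(b) is in S Z(P) (Z(P) = scalars omega^c'' I) *)
Definition inSZ (c : nat) (a b : 'M[F]_(m, n)) : Prop :=
  exists c' a' b' c'', inS c' a' b' /\
    forall v y, pauli p r c a b v y = pauli p r c' a' b' (pauli p r c'' 0 0 v) y.
End Stab.
Arguments inS {F K} p r {n} k {m} C D kappa c a b.
Arguments inCent {F K} p r {n} k {m} C D kappa c a b.
Arguments inSZ {F K} p r {n} k {m} C D kappa c a b.

(* The stabilizer S of Q consists of the omega^c X(a) Z(b) with trivial phase,
   a in C^m killed by every f_L (L in D), and b trace-orthogonal to C^m; two
   Paulis commute iff tr(b.a') = tr(b'.a).  Pairing a centralizer element with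
   the stabilizers Z(e_j (x) u), u in the dual of C, forces every row of a into
   C (a double-annihilator argument with characters), so a <> 0 costs weight at
   least d(C).  When a = 0, pairing with the stabilizers X(a') shows that
   z |-> tr(b.z) is f_M on C^m for some M in D, with M <> 0 unless Z(b) lies in
   S; then the weight is at least d(D) >= d(C).  Conversely X(e_i (x) c) for a
   minimum-weight c in C commutes with S but is not in S Z(P): some lambda has
   f_lambda(c) <> 0, and L = lambda d with d_i = 1 lies in D. *)

From HB Require Import structures.
From mathcomp Require Import all_boot all_order all_algebra all_field.
From mathcomp Require Import zify.
Import Order.TTheory GRing.Theory Num.Theory.
Local Open Scope ring_scope.

Lemma norm1_Re_le_N1 {y : algC} : `|y| = 1 -> 'Re y <= -1 -> y = -1.
Proof.
move=> ny Rey; have [le_Re_norm eq_Re_norm] := leif_Re_Creal (- y).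
have Re_Ny : 'Re (- y) = `|- y|.
  by apply/eqP; rewrite eq_le le_Re_norm normrN ny raddfN /= lerNr.
move: eq_Re_norm; rewrite Re_Ny eqxx => /esym/ger0_norm.
by rewrite normrN ny => Ny1; rewrite -[y]opprK -Ny1.
Qed.

Lemma sum_char_eq0 {G : finZmodType} {S : {pred G}} {f : G -> algC} {g0 : G} :
  {in S &, forall x y, x - y \in S} -> g0 \in S ->
  {in S, forall g, f (g + g0) = f g * f g0} -> f g0 != 1 ->
  \sum_(g in S) f g = 0.
Proof.
move=> subS Sg0 fM fg0_neq1.
have S0 : 0 \in S by rewrite -(subrr g0) subS.
have SDg0 g : (g + g0 \in S) = (g \in S).
  apply/idP/idP => [Sgg0|Sg]; first by rewrite -(addrK g0 g) subS.
  by rewrite -[g0]opprK -[- g0]add0r subS // subS.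
have sum_fixed : \sum_(g in S) f g = (\sum_(g in S) f g) * f g0.
  rewrite [LHS](reindex_inj (addIr g0)) /= mulr_suml.
  by apply: eq_big => g; rewrite ?SDg0 // => Sg; rewrite fM.
apply: contra_neq_eq fg0_neq1 => sum_neq0.
by apply: (mulfI sum_neq0); rewrite mulr1 -sum_fixed.
Qed.

Section Weights.
Context {E : finFieldType}.

Lemma hw_le {n} (v : 'rV[E]_n) : (hw v <= n)%N.
Proof. by rewrite /hw (leq_trans (max_card _)) ?card_ord. Qed.

Lemma dmin_le {n} {C : {vspace 'rV[E]_n}} {c} : c \in C -> c != 0 -> (dmin C <= hw c)%N.
Proof.
move=> Cc c_neq0; have Pc : (c \in C) && (c != 0) by rewrite Cc.
by rewrite /dmin -minEnat; have := bigmin_le_cond n hw (P := fun c => (c \in C) && (c != 0)) Pc.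
Qed.

Lemma dmin_attained {n} (C : {vspace 'rV[E]_n}) :
  (0 < \dim C)%N -> exists c, [/\ c \in C, c != 0 & hw c = dmin C].
Proof.
rewrite lt0n dimv_eq0 => C_neq0.
pose P : {pred 'rV[E]_n} := fun c => (c \in C) && (c != 0).
have PC : P (vpick C) by rewrite /P memv_pick vpick0.
rewrite /dmin -minEnat (bigmin_eq_arg n _ P hw PC) => [|c _]; last exact: hw_le.
by case: (arg_minP hw PC) => c /andP[Cc c_neq0] _; exists c.
Qed.

Lemma hw_row_le_pwt {m n} (a b : 'M[E]_(m, n)) j : (hw (row j a) <= pwt a b)%N.
Proof.
rewrite /hw /pwt -(@card_imset _ _ (fun l => (j, l))); last by move=> l1 l2 [].
apply/subset_leq_card/subsetP => _ /imsetP[l + ->].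
by rewrite !inE mxE => ->.
Qed.

Lemma hw_le_pwt_rows (V : zmodType) {m n} (L : 'rV[V]_m) (a b : 'M[E]_(m, n)) :
  (forall j, L 0 j != 0 -> row j b != 0) -> (hw L <= pwt a b)%N.
Proof.
move=> Lb; rewrite /hw /pwt; apply: leq_trans (leq_imset_card fst _).
apply/subset_leq_card/subsetP => j; rewrite inE => /Lb/eqP b_j_neq0.
have [l b_jl] : exists l, b j l != 0.
  apply/existsP; apply: contra_notT b_j_neq0 => /existsPn b_j0.
  by apply/rowP => l; rewrite !mxE; apply/eqP/negbNE/b_j0.
by apply/imsetP; exists (j, l); rewrite // inE b_jl orbT.
Qed.
End Weights.

Section PrimeCharacters.
Context {p : nat}.
Hypothesis p_prime : prime p.
Let p_gt0 : (0 < p)%N. Proof. exact: prime_gt0. Qed.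

Lemma zeta_expp : zeta p ^+ p = 1.
Proof. by rewrite /zeta exprAC rootCK // sqrrN expr1n. Qed.

(* A primitive [2p]-th root of unity [z] (or its conjugate) is a [p]-th root
   of [-1] in the upper half plane other than [-1]; since [p.-root (-1)] has
   maximal real part among these, it cannot be [-1] either. *)
Lemma zeta_neq1 : zeta p != 1.
Proof.
have [z z_prim] : {z : algC | (p.*2).-primitive_root z}.
  by apply: C_prim_root_exists; rewrite double_gt0.
have zp : z ^+ p = -1.
  have : (z ^+ p) ^+ 2 == 1 by rewrite -exprM muln2 (prim_expr_order z_prim).
  rewrite sqrf_eq1 -(prim_order_dvd z_prim) -muln2 -{2}(muln1 p).
  by rewrite dvdn_pmul2l // dvdn1 => /orP[|/eqP].
pose y := if 0 <= 'Im z then z else z^*.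
have yp : y ^+ p = -1 by rewrite /y; case: ifP; rewrite // -rmorphXn zp rmorphN1.
have Im_y : 0 <= 'Im y.
  rewrite /y; case: ifP => // Im_z; rewrite Im_conj oppr_ge0.
  by have := Creal_Im z; rewrite realE Im_z.
have ny : `|y| = 1.
  by apply/eqP; rewrite -(pexpr_eq1 p_gt0) // -normrX yp normrN normr1.
rewrite /zeta sqrf_eq1 negb_or; apply/andP; split; apply/eqP => w1.
  have := @rootCK algC p p_gt0 (-1); rewrite w1 expr1n => /eqP.
  by rewrite gt_eqF // (lt_trans (ltrN10 _) ltr01).
have ReN1 : 'Re (-1 : algC) = -1 by apply/Creal_ReP; rewrite rpredN1.
have := rootC_Re_max p_gt0 yp Im_y; rewrite w1 ReN1 => /(norm1_Re_le_N1 ny) y1.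
have z1 : z = -1.
  by move: y1; rewrite /y; case: ifP => // _ /(congr1 Num.conj); rewrite conjCK rmorphN1.
have : z ^+ 2 == 1 by rewrite z1 sqrrN expr1n.
rewrite -(prim_order_dvd z_prim) => /dvdn_leq -/(_ isT).
by have := prime_gt1 p_prime; lia.
Qed.

Lemma zeta_prim : p.-primitive_root (zeta p).
Proof.
have [d d_prim d_dvd] := prim_order_exists p_gt0 zeta_expp.
have [/eqP d1|/eqP dp] := orP ((primeP p_prime).2 d d_dvd); last by rewrite dp in d_prim.
by have := prim_expr_order d_prim; rewrite d1 expr1 => /eqP; rewrite (negbTE zeta_neq1).
Qed.

Lemma Fp_val_lt (t : 'F_p) : (val t < p)%N.
Proof. by case: t => v /=; rewrite Fp_cast. Qed.

Lemma zetaFpD (s t : 'F_p) :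
  zeta p ^+ val (s + t) = zeta p ^+ val s * zeta p ^+ val t.
Proof.
rewrite -exprD -[in RHS](expr_mod _ zeta_expp) /=.
by move: (val s + val t)%N => v; rewrite Fp_cast.
Qed.

Lemma zetaFp_eq1 (t : 'F_p) : (zeta p ^+ val t == 1) = (t == 0).
Proof.
by rewrite -(prim_order_dvd zeta_prim) /dvdn modn_small ?Fp_val_lt // -val_eqE.
Qed.

Lemma zeta_expr_neq0 j : zeta p ^+ j != 0.
Proof.
apply/expf_neq0/eqP => zeta0.
by have := zeta_expp; rewrite zeta0 expr0n gtn_eqF // => /eqP; rewrite eq_sym oner_eq0.
Qed.

Lemma omega_expr_neq0 c : omega p ^+ c != 0.
Proof.
by rewrite expf_neq0 // /omega; case: ifP => _; [exact: neq0Ci|exact: (zeta_expr_neq0 1)].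
Qed.

Lemma zetaFp_inj (s t : 'F_p) : zeta p ^+ val s = zeta p ^+ val t -> s = t.
Proof.
move=> eq_st; apply/eqP; rewrite -subr_eq0 -zetaFp_eq1.
apply/eqP/(mulIf (zeta_expr_neq0 (val t))).
by rewrite -zetaFpD subrK mul1r.
Qed.

Lemma zetaFp0 : zeta p ^+ val (0 : 'F_p) = 1.
Proof. exact: expr0. Qed.

Lemma zetaFp_sum (I : Type) (s : seq I) (P : pred I) (f : I -> 'F_p) :
  \prod_(i <- s | P i) zeta p ^+ val (f i) = zeta p ^+ val (\sum_(i <- s | P i) f i).
Proof. by elim/big_rec2: _ => [|i x y _ ->]; rewrite ?expr0 // zetaFpD. Qed.

Section Biorthogonal.
Variables (V W : finZmodType) (P : V -> W -> 'F_p) (A : {pred V}) (B : {pred W}).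
Hypotheses (A0 : 0 \in A) (subA : {in A &, forall x y, x - y \in A}).
Hypotheses (B0 : 0 \in B) (subB : {in B &, forall a b, a - b \in B}).
Hypothesis PDl : forall x y a, a \in B -> P (x + y) a = P x a + P y a.
Hypothesis PDr : forall x, {in B &, forall a b, P x (a + b) = P x a + P x b}.
Hypothesis P_nondeg : forall x, x != 0 -> exists2 a, a \in B & P x a != 0.

Let chi x a := zeta p ^+ val (P x a).

Lemma sum_chi_l a : a \in B ->
  \sum_(x in A) chi x a = if [forall x in A, P x a == 0] then #|A|%:R else 0.
Proof.
move=> Ba; case: (boolP [forall x in A, P x a == 0]) => [/forall_inP Pa0|].
  by rewrite -sumr_const; apply: eq_bigr => x /Pa0/eqP Pxa; rewrite /chi Pxa.
move=> /forall_inPn[x0 Ax0 Px0a].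
by apply: (sum_char_eq0 subA Ax0) => [x _|]; rewrite /chi ?PDl ?zetaFpD ?zetaFp_eq1.
Qed.

Lemma sum_chi_r x : x != 0 -> \sum_(a in B) chi x a = 0.
Proof.
move=> /P_nondeg[a0 Ba0 Pxa0].
by apply: (sum_char_eq0 subB Ba0) => [a Ba|]; rewrite /chi ?PDr ?zetaFpD ?zetaFp_eq1.
Qed.

(* Double counting of [\sum_(a in B) \sum_(x in A) chi (x + M) a]: summing
   over [a] first gives [0] when [M \notin A], while summing over [x] first
   gives [#|A|] times the number of [a] orthogonal to [A]. *)
Lemma mem_biorthogonal M :
  (forall a, a \in B -> {in A, forall x, P x a = 0} -> P M a = 0) -> M \in A.
Proof.
move=> M_perp; apply/contraT => AnM.
have AN x : x \in A -> - x \in A by move=> Ax; rewrite -sub0r subA.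
have sum_a_first : \sum_(x in A) \sum_(a in B) chi (x + M) a = 0.
  apply: big1 => x Ax; apply: sum_chi_r; apply: contra AnM => /eqP xM0.
  by rewrite -[M]add0r -(subrr x) addrAC xM0 add0r AN.
have sum_x_first : \sum_(x in A) \sum_(a in B) chi (x + M) a =
    \sum_(a in B) if [forall x in A, P x a == 0] then #|A|%:R else 0.
  rewrite exchange_big; apply: eq_bigr => a Ba.
  rewrite (eq_bigr (fun x => chi x a * chi M a)); last first.
    by move=> x _; rewrite /chi PDl ?zetaFpD.
  rewrite -mulr_suml sum_chi_l //; case: ifP => [/forall_inP Pa0|]; last by rewrite mul0r.
  by rewrite /chi M_perp ?mulr1 // => x /Pa0/eqP.
move: sum_x_first; rewrite sum_a_first => /esym/psumr_eq0P.
have term_ge0 a : a \in B -> 0 <= (if [forall x in A, P x a == 0] then #|A|%:R else 0 : algC).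
  by case: ifP.
move=> /(_ term_ge0 0 B0); rewrite ifT; last first.
  apply/forall_inP => x _; apply/eqP/(addrI (P x 0)).
  by rewrite -PDr // !addr0.
by move/eqP; rewrite pnatr_eq0 (cardD1 0) A0.
Qed.
End Biorthogonal.

Section AbsoluteTrace.
Context {F : finFieldType} {r : nat}.
Hypothesis cardF : #|F| = (p ^ r)%N.

Let charF : p \in [pchar F]. Proof. exact: card_finPcharP cardF p_prime. Qed.

Definition absTr (x : F) : F := \sum_(i < r) x ^+ (p ^ i).

Lemma absTrD x y : absTr (x + y) = absTr x + absTr y.
Proof.
rewrite -big_split; apply: eq_bigr => i _; apply: exprDn_pchar.
by rewrite (eq_pnat _ (pcharf_eq charF)) pnatX pnat_id.
Qed.

Lemma absTr_expp x : absTr x ^+ p = absTr x.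
Proof.
rewrite -(pFrobenius_autE charF) rmorph_sum /=.
under eq_bigr => i _ do rewrite pFrobenius_autE -exprM -expnSr.
have := big_ord_recr r (fun i : 'I_r.+1 => x ^+ (p ^ i)) : \sum_(i < r.+1) _ = _.
rewrite big_ord_recl /= -cardF expf_card expn0 expr1 [RHS]addrC => /addrI.
by rewrite /absTr => <-.
Qed.

Lemma natr_Fp_inj (s t : 'F_p) : ((val s)%:R : F) = (val t)%:R -> s = t.
Proof.
wlog le_st : s t / (val s <= val t)%N.
  move=> W eq_st; case: (leqP (val s) (val t)) => [le_st|/ltnW le_ts].
    exact: W.
  exact/esym/W/esym.
move=> eq_st; apply: val_inj; apply/eqP; rewrite eqn_leq le_st /=.
have : (val t - val s)%:R == 0 :> F by rewrite natrB // eq_st subrr.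
rewrite -(dvdn_pcharf charF) => p_dvd.
have [/eqP|/dvdn_leq/(_ p_dvd) le_p] := posnP (val t - val s); first by rewrite subn_eq0.
by have := leq_ltn_trans (leq_trans le_p (leq_subr _ _)) (Fp_val_lt t); rewrite ltnn.
Qed.

Lemma Frobenius_fixed_Fp {y : F} : y ^+ p = y -> exists t : 'F_p, (val t)%:R = y.
Proof.
move=> yp; case: (pickP (fun t : 'F_p => (val t)%:R == y)) => [t /eqP|y_notin].
  by exists t.
exfalso.
pose P : {poly F} := 'X^p - 'X.
have sizeP : size P = p.+1.
  by rewrite size_polyDl ?size_polyXn // size_polyN size_polyX ltnS prime_gt1.
have roots_P : all (root P) (y :: [seq (val t)%:R | t : 'F_p]).
  rewrite /= rootE !hornerE yp subrr eqxx /=; apply/allP => _ /mapP[t _ ->].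
  by rewrite rootE !hornerE -(pFrobenius_autE charF) pFrobenius_aut_nat subrr.
have uniq_roots : uniq (y :: [seq ((val t)%:R : F) | t : 'F_p]).
  rewrite /= map_inj_uniq ?enum_uniq ?andbT; last exact: natr_Fp_inj.
  by apply/mapP => -[t _ yt]; have := y_notin t; rewrite yt eqxx.
have P_neq0 : P != 0 by rewrite -size_poly_eq0 sizeP.
have := max_poly_roots P_neq0 roots_P uniq_roots.
by rewrite sizeP /= size_map -cardE card_Fp // ltnn.
Qed.

Lemma trFE x : ((val (trF p r x))%:R : F) = absTr x.
Proof.
rewrite /trF; case: pickP => [t /eqP -> //|no_t].
have [t tE] := Frobenius_fixed_Fp (absTr_expp x).
by have := no_t t; rewrite /= tE eqxx.
Qed.

Lemma trFD (x y : F) : trF p r (x + y) = trF p r x + trF p r y.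
Proof.
apply: natr_Fp_inj; rewrite trFE absTrD -!trFE -natrD.
rewrite -[in LHS](GRing.natr_mod_pchar charF) /=.
by move: (nat_of_ord _ + nat_of_ord _)%N => v; rewrite Fp_cast.
Qed.

Lemma trF0 : trF p r (0 : F) = 0.
Proof. by apply: (addrI (trF p r (0 : F))); rewrite -trFD !addr0. Qed.

Lemma trF_neq0 : exists z : F, trF p r z != 0.
Proof.
have p_gt1 := prime_gt1 p_prime.
have [r0|r_gt0] := posnP r; first by have := finNzRing_gt1 F; rewrite cardF r0.
pose T : {poly F} := \sum_(i < r) 'X^(p ^ i).
have T_eval z : T.[z] = absTr z.
  by rewrite horner_sum; apply: eq_bigr => i _; rewrite hornerXn.
have T_neq0 : T != 0.
  apply/eqP => /(congr1 (coefp 1)) /=; rewrite coef0 coef_sum.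
  rewrite (bigD1 (Ordinal r_gt0)) //= coefXn expn0 eqxx big1 ?addr0.
    by move/eqP; rewrite oner_eq0.
  move=> i; rewrite -val_eqE /= => i_neq0.
  by rewrite coefXn -(expn0 p) eqn_exp2l // eq_sym (negbTE i_neq0).
have T_size : (size T <= (p ^ r.-1).+1)%N.
  apply: leq_trans (size_sum _ _ _) _; apply/bigmax_leqP => i _.
  by rewrite size_polyXn ltnS leq_pexp2l ?prime_gt0 // -ltnS prednK.
case: (pickP (fun z : F => trF p r z != 0)) => [z|trF_eq0]; first by exists z.
have T_roots : all (root T) (enum F).
  by apply/allP => z _; rewrite rootE T_eval -trFE; move/negbFE/eqP: (trF_eq0 z) => ->.
have := leq_trans (max_poly_roots T_neq0 T_roots (enum_uniq F)) T_size.
rewrite -cardE cardF -{1}(prednK r_gt0) expnS ltnS.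
by rewrite leqNgt ltn_Pmull // expn_gt0 prime_gt0.
Qed.

Section SymplecticForm.
Context {m n : nat}.
Implicit Types a b x y : 'M[F]_(m, n).

Lemma trdotC b x : trdot p r b x = trdot p r x b.
Proof. by apply: eq_bigr => j _; apply: eq_bigr => l _; rewrite mulrC. Qed.

Lemma trdotDr b x y : trdot p r b (x + y) = trdot p r b x + trdot p r b y.
Proof.
rewrite -big_split; apply: eq_bigr => j _.
by rewrite -big_split; apply: eq_bigr => l _; rewrite mxE mulrDr trFD.
Qed.

Lemma trdot0r b : trdot p r b 0 = 0.
Proof. by apply: (addrI (trdot p r b 0)); rewrite -trdotDr !addr0. Qed.

Lemma trdotBr b x y : trdot p r b (x - y) = trdot p r b x - trdot p r b y.
Proof.
apply: (addIr (trdot p r b y)); rewrite -trdotDr subrK addrNK //.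
Qed.

Lemma trdotDl b b' x : trdot p r (b + b') x = trdot p r b x + trdot p r b' x.
Proof. by rewrite !(trdotC _ x) trdotDr. Qed.

Lemma trdot0l x : trdot p r 0 x = 0.
Proof. by rewrite trdotC trdot0r. Qed.

Lemma trdot_nondeg x : x != 0 -> exists b, trdot p r b x != 0.
Proof.
move=> x_neq0; have [z trz] := trF_neq0.
have [[j l] /= x_jl] : exists ij : 'I_m * 'I_n, x ij.1 ij.2 != 0.
  apply/existsP; apply: contraR x_neq0 => /existsPn x0.
  by apply/eqP/matrixP => j l; rewrite mxE; apply/eqP/negbNE/(x0 (j, l)).
exists ((z / x j l) *: delta_mx j l); rewrite /trdot (bigD1 j) // (bigD1 l) //=.
rewrite !mxE !eqxx mulr1 divfK // !big1 ?addr0 // => [j' j'_neq|l' l'_neq].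
  by apply: big1 => l' _; rewrite !mxE (negbTE j'_neq) mulr0 mul0r trF0.
by rewrite !mxE (negbTE l'_neq) andbF mulr0 mul0r trF0.
Qed.

Lemma pauli_pauli c a b c' a' b' v y :
  pauli p r c a b (pauli p r c' a' b' v) y = omega p ^+ c * omega p ^+ c'
    * zeta p ^+ val (trdot p r b (y - a) + trdot p r b' (y - a - a')) * v (y - a - a').
Proof. by rewrite /pauli zetaFpD !mulrA (mulrAC (omega p ^+ c)). Qed.

Lemma pauli_commP c a b c' a' b' :
  (forall v y, pauli p r c a b (pauli p r c' a' b' v) y
             = pauli p r c' a' b' (pauli p r c a b v) y)
  <-> trdot p r b a' = trdot p r b' a.
Proof.
split=> [comm|ba'_b'a v y].
  have := comm (fun x => (x == 0)%:R) (a + a').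
  have aa'_a : a + a' - a = a' by rewrite addrAC subrr add0r.
  rewrite !pauli_pauli aa'_a addrK !subrr !trdot0r !addr0 eqxx !mulr1.
  rewrite [omega p ^+ c' * _]mulrC.
  by move=> /(mulfI (mulf_neq0 (omega_expr_neq0 c) (omega_expr_neq0 c'))) /zetaFp_inj.
rewrite !pauli_pauli [omega p ^+ c' * _]mulrC [y - a' - a]addrAC; congr (_ * _ ^+ val _ * _).
rewrite !trdotBr ba'_b'a [RHS]addrC -[RHS]addrA; congr (_ + _).
by rewrite addrCA addrA.
Qed.
End SymplecticForm.

Section Stabilizer.
Context {K : finFieldType} {n k m : nat}.
Context {C : {vspace 'rV[F]_n}} {D : {vspace 'rV[K]_m}} {kappa : K -> 'rV[F]_n -> 'F_p}.
Hypothesis kappaDr :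
  forall lam, {in C &, forall c1 c2, kappa lam (c1 + c2) = kappa lam c1 + kappa lam c2}.
Hypothesis kappaDl :
  forall lam mu, {in C, forall c, kappa (lam + mu) c = kappa lam c + kappa mu c}.
Hypothesis kappa_inj :
  forall lam mu, {in C, forall c, kappa lam c = kappa mu c} -> lam = mu.
Hypothesis kappa_surj : forall g : 'rV[F]_n -> 'F_p,
  {in C &, forall c1 c2, g (c1 + c2) = g c1 + g c2} ->
  exists lam, {in C, forall c, kappa lam c = g c}.

Implicit Types (a b x y z : 'M[F]_(m, n)) (L : 'rV[K]_m) (u : 'rV[F]_n).

Local Notation inS := (inS p r k C D kappa).
Local Notation inCent := (inCent p r k C D kappa).
Local Notation inSZ := (inSZ p r k C D kappa).
Local Notation trdot := (trdot p r).
Local Notation zetaFp t := (zeta p ^+ val (t : 'F_p)).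

Definition Cm : {pred 'M[F]_(m, n)} := fun x => [forall j, row j x \in C].

Lemma CmP x : reflect (forall j, row j x \in C) (x \in Cm).
Proof. exact: forallP. Qed.

Lemma Cm0 : 0 \in Cm.
Proof. by apply/CmP => j; rewrite row0 mem0v. Qed.

Lemma CmB : {in Cm &, forall x y, x - y \in Cm}.
Proof. by move=> x y /CmP Cx /CmP Cy; apply/CmP => j; rewrite raddfB memvB ?Cx ?Cy. Qed.

Lemma CmD : {in Cm &, forall x y, x + y \in Cm}.
Proof. by move=> x y /CmP Cx /CmP Cy; apply/CmP => j; rewrite raddfD memvD ?Cx ?Cy. Qed.

Lemma CmBl a x : a \in Cm -> (x - a \in Cm) = (x \in Cm).
Proof.
move=> Ca; apply/idP/idP => [Cxa|Cx]; last exact: CmB.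
by rewrite -(subrK a x) CmD.
Qed.

Definition kdot (L : 'rV[K]_m) (x : 'M[F]_(m, n)) : 'F_p :=
  \sum_(j < m) kappa (L 0 j) (row j x).

Lemma kappa0r lam : kappa lam 0 = 0.
Proof. by apply: (addrI (kappa lam 0)); rewrite -kappaDr ?mem0v // !addr0. Qed.

Lemma kappa0l : {in C, forall c, kappa 0 c = 0}.
Proof. by move=> c Cc; apply: (addrI (kappa 0 c)); rewrite -kappaDl // !addr0. Qed.

Lemma kdotDl L1 L2 : {in Cm, forall x, kdot (L1 + L2) x = kdot L1 x + kdot L2 x}.
Proof.
by move=> x /CmP Cx; rewrite -big_split; apply: eq_bigr => j _; rewrite mxE kappaDl.
Qed.

Lemma kdotDr L : {in Cm &, forall x y, kdot L (x + y) = kdot L x + kdot L y}.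
Proof.
move=> x y /CmP Cx /CmP Cy; rewrite -big_split; apply: eq_bigr => j _.
by rewrite raddfD kappaDr ?Cx ?Cy.
Qed.

Lemma kdot0r L : kdot L 0 = 0.
Proof. by apply: big1 => j _; rewrite row0 kappa0r. Qed.

Lemma kdot0l : {in Cm, forall x, kdot 0 x = 0}.
Proof. by move=> x /CmP Cx; apply: big1 => j _; rewrite mxE kappa0l. Qed.

Lemma kdotBr L : {in Cm &, forall x y, kdot L (x - y) = kdot L x - kdot L y}.
Proof.
move=> x y Cx Cy; apply: (addIr (kdot L y)).
by rewrite -kdotDr ?CmB // subrK addrNK.
Qed.

Let nrm : algC := (sqrtC (#|F| ^ k)%:R)^-1 ^+ m.

Lemma nrm_neq0 : nrm != 0.
Proof.
have cardF_gt0 : (0 < #|F|)%N by apply/card_gt0P; exists 0.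
by rewrite expf_neq0 // invr_eq0 sqrtC_eq0 pnatr_eq0 expn_eq0 eqn0Ngt cardF_gt0.
Qed.

Lemma PhiE L x :
  Phi p k C kappa L x = if x \in Cm then nrm * zetaFp (kdot L x) else 0.
Proof.
rewrite /Phi; case: (boolP (x \in Cm)) => [/CmP Cx|/forallPn[j Cnx]].
  rewrite (eq_bigr (fun j => (sqrtC (#|F| ^ k)%:R)^-1 * zetaFp (kappa (L 0 j) (row j x)))).
    by rewrite big_split prodr_const card_ord zetaFp_sum.
  by move=> j _; rewrite /phi Cx.
by rewrite (bigD1 j) //= /phi (negbTE Cnx) mul0r.
Qed.

Lemma inQ_Phi L : L \in D -> inQ p k C D kappa (Phi p k C kappa L).
Proof.
move=> DL; exists (fun L' => (L' == L)%:R) => x.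
rewrite (bigD1 L) //= eqxx mul1r big1 ?addr0 // => L' /andP[_ /negbTE->].
by rewrite mul0r.
Qed.

Lemma inSP c a b :
  inS c a b <-> [/\ a \in Cm, omega p ^+ c = 1,
                   {in Cm, forall z, trdot b z = 0} & {in D, forall L, kdot L a = 0}].
Proof.
split=> [stab|[Ca omega1 b_perp a_perp] v [coef vE] y]; last first.
  rewrite /pauli !vE omega1 mul1r mulr_sumr; apply: eq_bigr => L DL.
  rewrite mulrCA; congr (_ * _); rewrite !PhiE CmBl //.
  case: ifP => [Cy|_]; last by rewrite mulr0.
  by rewrite b_perp ?CmB // zetaFp0 mul1r kdotBr // a_perp // subr0.
have PhiS L y : L \in D ->
    omega p ^+ c * zetaFp (trdot b (y - a)) * Phi p k C kappa L (y - a)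
    = Phi p k C kappa L y.
  by move=> DL; exact: (stab _ (inQ_Phi L DL) y).
have Phi0 : Phi p k C kappa (0 : 'rV[K]_m) 0 = nrm.
  by rewrite PhiE Cm0 kdot0r zetaFp0 mulr1.
have := PhiS 0 a (mem0v D); rewrite subrr trdot0r zetaFp0 mulr1 Phi0.
rewrite PhiE; case: ifPn => [Ca|_ /eqP]; last first.
  by rewrite mulf_eq0 (negbTE nrm_neq0) (negbTE (omega_expr_neq0 c)).
rewrite kdot0l // zetaFp0 mulr1 -{2}[nrm]mul1r => /(mulIf nrm_neq0) omega1.
split=> // [z Cz|L DL]; apply/zetaFp_inj/(mulfI nrm_neq0).
  have := PhiS 0 (z + a) (mem0v D); rewrite addrK omega1 mul1r !PhiE CmD // Cz.
  by rewrite !kdot0l ?CmD // zetaFp0 !mulr1 mulrC => ->.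
have := PhiS L a DL; rewrite subrr trdot0r omega1 zetaFp0 !mul1r !PhiE Cm0 Ca.
by rewrite kdot0r => <-.
Qed.

Lemma inCentP c a b :
  inCent c a b <-> (forall c' a' b', inS c' a' b' -> trdot b a' = trdot b' a).
Proof.
by split=> comm c' a' b' /comm /pauli_commP.
Qed.

Lemma inS_inSZ c a b : inS 0 a b -> inSZ c a b.
Proof.
move=> stab; exists 0%N, a, b, c; split=> // v y.
by rewrite /pauli !expr0 !mul1r subr0 trdot0l zetaFp0 mulr1 mulrCA mulrA.
Qed.

Lemma inSZ_inS c a b : inSZ c a b -> exists c' b', inS c' a b'.
Proof.
case=> c' [a' [b' [c'' [stab pauliE]]]]; exists c', b'.
suff -> : a = a' by [].
have := pauliE (fun x => (x == 0)%:R) a.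
rewrite /pauli !subr0 subrr eqxx !trdot0l trdot0r !zetaFp0 !mulr1.
rewrite subr_eq0; case: eqP => [//|_]; rewrite !mulr0 => /eqP.
by rewrite (negbTE (omega_expr_neq0 c)).
Qed.

Definition embed_row (i : 'I_m) (c : 'rV[F]_n) : 'M[F]_(m, n) :=
  \matrix_j (if j == i then c else 0).

Lemma row_embed_row i c j : row j (embed_row i c) = if j == i then c else 0.
Proof. exact: rowK. Qed.

Lemma embed_row_Cm i c : c \in C -> embed_row i c \in Cm.
Proof. by move=> Cc; apply/CmP => j; rewrite row_embed_row; case: ifP; rewrite ?mem0v. Qed.

Lemma kdot_embed_row L i c : kdot L (embed_row i c) = kappa (L 0 i) c.
Proof.
rewrite /kdot (bigD1 i) //= row_embed_row eqxx big1 ?addr0 // => j /negbTE j_neq_i.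
by rewrite row_embed_row j_neq_i kappa0r.
Qed.

Lemma trdot_rows b z : trdot b z = \sum_j trdot (row j b) (row j z).
Proof.
by apply: eq_bigr => j _; rewrite /trdot big_ord1; apply: eq_bigr => l _; rewrite !mxE.
Qed.

Lemma trdot_embed_row i u z : trdot (embed_row i u) z = trdot u (row i z).
Proof.
rewrite trdot_rows (bigD1 i) //= row_embed_row eqxx big1 ?addr0 // => j /negbTE j_neq_i.
by rewrite row_embed_row j_neq_i trdot0l.
Qed.

Lemma pwt_embed_row i c : pwt (embed_row i c) 0 = hw c.
Proof.
rewrite /pwt /hw -[in RHS](@card_imset _ _ (fun l => (i, l))); last by move=> l1 l2 [].
apply: eq_card => -[j l]; rewrite !inE /= !mxE eqxx orbF.
have [->|j_neq_i] := eqVneq j i; first by rewrite mem_imset ?inE // => l1 l2 [].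
rewrite mxE eqxx; apply/esym/imsetP => -[l' _ [j_i _]].
by rewrite j_i eqxx in j_neq_i.
Qed.

Lemma kappa_nondeg c : c \in C -> c != 0 -> exists lam, kappa lam c != 0.
Proof.
move=> Cc /trdot_nondeg[u u_c]; have [|lam lamE] := kappa_surj (trdot u).
  by move=> c1 c2 _ _; rewrite trdotDr.
by exists lam; rewrite lamE.
Qed.

Lemma kdot_nondeg L : L != 0 -> exists2 z, z \in Cm & kdot L z != 0.
Proof.
move=> L_neq0; have [i L_i] : exists i, L 0 i != 0.
  apply/existsP; apply: contraR L_neq0 => /existsPn L0.
  by apply/eqP/rowP => i; rewrite mxE; apply/eqP/negbNE/L0.
have [c Cc kappa_c] : exists2 c, c \in C & kappa (L 0 i) c != 0.
  apply/exists_inP; apply: contraR L_i => /exists_inPn kappa0.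
  by apply/eqP/kappa_inj => c Cc; rewrite kappa0l //; apply/eqP/negbNE/kappa0.
by exists (embed_row i c); rewrite ?embed_row_Cm ?kdot_embed_row.
Qed.

Lemma inCent_row_in_code {c a b} : inCent c a b -> forall j, row j a \in C.
Proof.
move=> /inCentP cent j.
apply: (mem_biorthogonal _ _ (fun v u : 'rV[F]_n => trdot u v) (fun v => v \in C) predT).
- exact: mem0v.
- exact: memvB.
- by [].
- by [].
- by move=> x y u _; rewrite trdotDr.
- by move=> x u v _ _; rewrite trdotDl.
- by move=> v /trdot_nondeg[u u_v]; exists u.
move=> u _ u_perp.
have stab : inS 0 0 (embed_row j u).
  apply/inSP; split=> [||z /CmP Cz|L _]; rewrite ?Cm0 ?expr0 ?kdot0r //.
  by rewrite trdot_embed_row u_perp.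
by have := cent _ _ _ stab; rewrite trdot0r trdot_embed_row.
Qed.

Lemma inCentZ_dual {c b} : inCent c 0 b ->
  exists2 M, M \in D & forall j, {in C, forall u, kappa (M 0 j) u = trdot (row j b) u}.
Proof.
move=> /inCentP cent.
have /fin_all_exists[mu muE] :
    forall j, exists lam, {in C, forall u, kappa lam u = trdot (row j b) u}.
  by move=> j; apply: kappa_surj => u1 u2 _ _; apply: trdotDr.
have kdotE : {in Cm, forall z, kdot (\row_j mu j) z = trdot b z}.
  move=> z /CmP Cz; rewrite trdot_rows; apply: eq_bigr => j _.
  by rewrite mxE muE.
exists (\row_j mu j) => [|j u Cu]; last by rewrite mxE muE.
apply: (mem_biorthogonal _ _ kdot (fun L => L \in D) Cm).
- exact: mem0v.
- exact: memvB.
- exact: Cm0.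
- exact: CmB.
- by move=> L1 L2 z; apply: kdotDl.
- exact: kdotDr.
- exact: kdot_nondeg.
move=> a' Ca' a'_perp; rewrite kdotE //.
have stab : inS 0 a' 0 by apply/inSP; split; rewrite ?expr0 // => z _; apply: trdot0l.
by have := cent _ _ _ stab; rewrite trdot0l.
Qed.

Lemma dmin_le_pwt_inCent c a b : (dmin C <= dmin D)%N ->
  inCent c a b -> ~ inSZ c a b -> (dmin C <= pwt a b)%N.
Proof.
move=> CD cent notSZ; have [a0|a_neq0] := eqVneq a 0; last first.
  have [j a_j] : exists j, row j a != 0.
    apply/existsP; apply: contraR a_neq0 => /existsPn a0.
    by apply/eqP/row_matrixP => j; rewrite row0; apply/eqP/negbNE/a0.
  exact: leq_trans (dmin_le (inCent_row_in_code cent j) a_j) (hw_row_le_pwt a b j).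
subst a; have [M DM ME] := inCentZ_dual cent.
have M_neq0 : M != 0.
  apply/eqP => M0; apply/notSZ/inS_inSZ/inSP.
  split=> [||z /CmP Cz|L _]; rewrite ?Cm0 ?expr0 ?kdot0r //.
  by rewrite trdot_rows big1 // => j _; rewrite -ME // M0 mxE kappa0l.
apply: leq_trans CD (leq_trans (dmin_le DM M_neq0) _); apply: hw_le_pwt_rows => j.
apply: contra => /eqP b_j0; apply/eqP/kappa_inj => u Cu.
by rewrite ME // b_j0 trdot0l kappa0l.
Qed.

Lemma embed_row_inCent_notSZ i c0 : c0 \in C -> c0 != 0 ->
  (exists2 d, d \in D & d 0 i = 1) ->
  inCent 0 (embed_row i c0) 0 /\ ~ inSZ 0 (embed_row i c0) 0.
Proof.
move=> Cc0 c0_neq0 [d Dd d_i]; split.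
  apply/inCentP => c' a' b' /inSP[_ _ b'_perp _].
  by rewrite trdot0l b'_perp ?embed_row_Cm.
move=> /inSZ_inS[c' [b' /inSP[_ _ _ a_perp]]].
have [mu kappa_mu] := kappa_nondeg _ Cc0 c0_neq0.
have := a_perp (mu *: d) (memvZ mu Dd); rewrite kdot_embed_row mxE d_i mulr1.
by move/eqP; rewrite (negbTE kappa_mu).
Qed.

End Stabilizer.

End AbsoluteTrace.

End PrimeCharacters.

Theorem corollary3p4
  (p r : nat) (F K : finFieldType) (n k m s : nat)
  (C : {vspace 'rV[F]_n}) (D : {vspace 'rV[K]_m})
  (kappa : K -> 'rV[F]_n -> 'F_p) :
  prime p ->
  #|F| = (p ^ r)%N ->
  #|K| = ((p ^ r) ^ k)%N ->
  \dim C = k -> (1 <= k < n)%N ->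
  \dim D = s -> (1 <= s < m)%N ->
  (forall i : 'I_m, exists2 d : 'rV[K]_m, d \in D & d 0 i = 1) ->
  (* each f_lambda = kappa lambda is F_p-linear (additive) on C *)
  (forall lam c1 c2, c1 \in C -> c2 \in C ->
     kappa lam (c1 + c2) = kappa lam c1 + kappa lam c2) ->
  (* kappa is F_p-linear (additive) *)
  (forall lam mu c, c \in C -> kappa (lam + mu) c = kappa lam c + kappa mu c) ->
  (* kappa is injective *)
  (forall lam mu, (forall c, c \in C -> kappa lam c = kappa mu c) -> lam = mu) ->
  (* kappa is surjective onto L(C, F_p) *)
  (forall g : 'rV[F]_n -> 'F_p,
     (forall c1 c2, c1 \in C -> c2 \in C -> g (c1 + c2) = g c1 + g c2) ->
     exists lam, forall c, c \in C -> kappa lam c = g c) ->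
  (dmin C <= dmin D)%N ->
  (exists (c : nat) (a b : 'M[F]_(m, n)),
      inCent p r k C D kappa c a b /\ ~ inSZ p r k C D kappa c a b /\
      pwt a b = dmin C) /\
  (forall (c : nat) (a b : 'M[F]_(m, n)),
      inCent p r k C D kappa c a b -> ~ inSZ p r k C D kappa c a b ->
      (dmin C <= pwt a b)%N).
Proof.
move=> p_prime cardF _ dimC k_bounds _ s_bounds unit_coord kappaDr kappaDl kappa_inj
  kappa_surj CD.
have [c0 [Cc0 c0_neq0 hw_c0]] : exists c, [/\ c \in C, c != 0 & hw c = dmin C].
  by apply: dmin_attained; rewrite dimC; case/andP: k_bounds.
have m_gt0 : (0 < m)%N by lia.
pose i := Ordinal m_gt0.
have [cent notSZ] := embed_row_inCent_notSZ (k := k) p_prime cardF kappaDr kappaDl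
  kappa_surj i c0 Cc0 c0_neq0 (unit_coord i).
split; first by exists 0%N, (embed_row i c0), 0; rewrite pwt_embed_row hw_c0.
by move=> c a b; apply: dmin_le_pwt_inCent.
Qed.
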